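(* Let $(M,\cdot)$ be a moving semigroup. Then the family of DIP subsets of $M$ is partition regular: if $X\subseteq M$ is DIP and $Y\subseteq X$, then either $Y$ or $X\setminus Y$ is DIP.
   Context: $\beta M$ is the Stone–Čech compactification of the discrete semigroup $M$ with the usual extended operation; $(M,\cdot)$ is moving if $\beta M\setminus M$ is a subsemigroup of $\beta M$. For a sequence $(x_n)$ in $M$, $\mathrm{FP}(x_n)=\{x_{i_1}\cdots x_{i_k}: k\ge1,\ i_1<\cdots<i_k\}$. A set $A\subseteq M$ is DIP if there is an injective sequence $(x_n)$ in $M$ with $\mathrm{FP}(x_n)\subseteq A$. *)

From Stdlib Require Import List Sorted Arith.
Import ListNotations.

Section Defs.
Variable M : Type.
Variable op : M -> M -> M.

Definition is_ultrafilter (U : (M -> Prop) -> Prop) : Prop :=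
  ~ U (fun _ => False) /\
  U (fun _ => True) /\
  (forall A B : M -> Prop, U A -> (forall x, A x -> B x) -> U B) /\
  (forall A B : M -> Prop, U A -> U B -> U (fun x => A x /\ B x)) /\
  (forall A : M -> Prop, U A \/ U (fun x => ~ A x)).

Definition principal (U : (M -> Prop) -> Prop) : Prop :=
  exists a : M, forall A : M -> Prop, U A <-> A a.

(* The usual extension of the operation to beta M:
   A in p.q  iff  {x | x^{-1}A in q} in p,  with x^{-1}A = {y | x y in A}. *)
Definition ultra_mul (p q : (M -> Prop) -> Prop) : (M -> Prop) -> Prop :=
  fun A => p (fun x => q (fun y => A (op x y))).

(* (M, op) is moving: beta M \ M is a subsemigroup of beta M, i.e. the
   product of two non-principal ultrafilters is non-principal. *)
Definition moving : Prop :=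
  forall p q, is_ultrafilter p -> is_ultrafilter q ->
    ~ principal p -> ~ principal q -> ~ principal (ultra_mul p q).

Definition fp_prod (x : nat -> M) (i0 : nat) (l : list nat) : M :=
  fold_left (fun acc i => op acc (x i)) l (x i0).

Definition FP_sub (x : nat -> M) (A : M -> Prop) : Prop :=
  forall (i0 : nat) (l : list nat), Sorted lt (i0 :: l) -> A (fp_prod x i0 l).

Definition DIP (A : M -> Prop) : Prop :=
  exists x : nat -> M, (forall m n, x m = x n -> m = n) /\ FP_sub x A.

End Defs.

From Stdlib Require Import List Sorted Arith Lia ClassicalEpsilon.
From mathcomp Require Import ssreflect ssrfun ssrbool boolp classical_sets filter.
Import ListNotations.
Local Open Scope classical_set_scope.

Set Implicit Arguments.
Unset Strict Implicit.

(* Fix an injective x with FP(x) contained in X.  The free ultrafilters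
   containing every tail FP((x_n)_{n >= m}) form a nonempty closed subset of
   beta M, and a subsemigroup because M is moving; by the Ellis-Numakura lemma
   it contains an idempotent e.  Since X is in e, so is Y or X \ Y, and by the
   Galvin-Glazer construction every member of a free idempotent ultrafilter is
   DIP. *)

Section Ultrafilter.
Variable M : Type.
Implicit Types (p q : (M -> Prop) -> Prop) (A B : M -> Prop).
Local Notation ult := (is_ultrafilter M).

Lemma ultT p : ult p -> p setT.
Proof. by case=> _ []. Qed.

Lemma ultS p A B : ult p -> A `<=` B -> p A -> p B.
Proof. by case=> _ [_ [pS _]] AB /pS; apply. Qed.

Lemma ultI p A B : ult p -> p A -> p B -> p (A `&` B).
Proof. by case=> _ [_ [_ [pI _]]]; apply: pI. Qed.

Lemma ult_ex p A : ult p -> p A -> A !=set0.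
Proof.
move=> Up pA; apply: contrapT => nA; have [p0 _] := Up; apply: p0.
by apply: ultS Up _ pA => z Az; apply: nA; exists z.
Qed.

Lemma ult_inhabited p : ult p -> inhabited M.
Proof. by move=> Up; have [z _] := ult_ex Up (ultT Up); exists. Qed.

Lemma ult_setC p A : ult p -> ~ p A -> p (~` A).
Proof. by case=> _ [_ [_ [_ pU]]] npA; case: (pU A). Qed.

Lemma ult_notC p A : ult p -> p A -> ~ p (~` A).
Proof. by move=> Up pA pnA; have [z []] := ult_ex Up (ultI Up pA pnA). Qed.

Lemma ult_ext p q : ult p -> ult q -> (forall A, p A -> q A) -> p = q.
Proof.
move=> Up Uq pq; apply: funext => A; apply: propext; split=> [/pq //|qA].
by apply: contrapT => /(ult_setC Up) /pq; apply: ult_notC.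
Qed.

Definition free p := forall a : M, p (fun z => z <> a).

Lemma free_not_principal p : ult p -> free p <-> ~ principal M p.
Proof.
move=> Up; split=> [pfree [a pa] | npr a]; first by have /pa := pfree a.
apply: contrapT => /(ult_setC Up) pa; apply: npr; exists a => A.
split=> [pA | Aa]; last by apply: ultS Up _ pa => z /contrapT ->.
apply: contrapT => nAa; have [z [Az /contrapT za]] := ult_ex Up (ultI Up pA pa).
by rewrite za in Az.
Qed.

Lemma UltraFilter_is_ultrafilter (F : set_system M) : UltraFilter F -> ult F.
Proof.
move=> UF; split; first exact: filter_not_empty.
split; first exact: filterT.
split; first by move=> A B FA AB; apply: filterS FA.
split; first by move=> A B; apply: filterI.
by move=> A; apply: in_ultra_setVsetC.
Qed.

Definition ultrafilters_over (G : (M -> Prop) -> Prop) p :=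
  ult p /\ forall A, G A -> p A.

Lemma ultrafilter_of_base (G : (M -> Prop) -> Prop) :
  G !=set0 -> (forall A, G A -> A !=set0) ->
  (forall A B, G A -> G B -> exists2 C, G C & C `<=` A `&` B) ->
  ultrafilters_over G !=set0.
Proof.
move=> G0 Gne GI.
have FG : ProperFilter (filter_from G id).
  apply: filter_from_proper; last by move=> A /Gne.
  by apply: filter_from_filter => // A B GA GB; have [C GC CAB] := GI A B GA GB; exists C.
have [p [Up Gp]] := ultraFilterLemma FG.
exists p; split; first exact: UltraFilter_is_ultrafilter.
by move=> A GA; apply: Gp; exists A.
Qed.

End Ultrafilter.

Section StoneCech.
Variables (M : Type) (op : M -> M -> M).
Hypothesis opA : forall a b c : M, op a (op b c) = op (op a b) c.
Local Notation ult := (is_ultrafilter M).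
Local Notation mul := (ultra_mul M op).
Implicit Types (p q r : (M -> Prop) -> Prop) (K L : ((M -> Prop) -> Prop) -> Prop).

Lemma ultra_mul_ult p q : ult p -> ult q -> ult (mul p q).
Proof.
move=> Up Uq; split; first by move=> /(ult_ex Up) [x /(ult_ex Uq) [y []]].
split; first by apply: ultS Up _ (ultT Up) => x _; apply: ultS Uq _ (ultT Uq).
split.
  by move=> A B pqA AB; apply: ultS Up _ pqA => x qAx; apply: ultS Uq _ qAx => y /AB.
split.
  by move=> A B pqA pqB; apply: ultS Up _ (ultI Up pqA pqB) => x []; apply: ultI Uq.
move=> A; case: (pselect (mul p q A)) => [|npqA]; [by left | right].
by apply: ultS Up _ (ult_setC Up npqA) => x /(ult_setC Uq).
Qed.

Lemma ultra_mulA p q r : mul (mul p q) r = mul p (mul q r).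
Proof.
apply: funext => A; congr p; apply: funext => x; congr q; apply: funext => y.
by congr r; apply: funext => z; rewrite opA.
Qed.

(* K is closed in the Stone topology of beta M: an ultrafilter containing
   every set common to all members of K lies in K. *)
Definition closed K :=
  forall r, ult r -> (forall A, (forall q, K q -> q A) -> r A) -> K r.

Definition subsemigroup K := forall p q, K p -> K q -> K (mul p q).

Definition closed_subsemigroup K :=
  [/\ forall q, K q -> ult q, closed K, subsemigroup K & K !=set0].

Lemma closed_mulr K p : (forall q, K q -> ult q) -> closed K -> ult p ->
  closed (fun r => exists2 q, K q & r = mul q p).
Proof.
move=> KU Kc Up r Ur rcl.
pose pre B x := p (fun y => B (op x y)).
pose G A := exists D B, [/\ forall q, K q -> q D, r B & A = D `&` pre B].
have [q [Uq Gq]] : ultrafilters_over G !=set0.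
  apply: ultrafilter_of_base.
  - exists (setT `&` pre setT), setT, setT; split=> //; last exact: ultT.
    by move=> q /KU /ultT.
  - (* otherwise ~` B would lie in every q * p with q in K, hence in r *)
    move=> _ [D [B [KD rB ->]]]; apply: contrapT => nDB.
    case: (ult_notC Ur rB); apply: rcl => _ [q Kq ->].
    apply: ultS (KU q Kq) _ (KD q Kq) => x Dx.
    by apply: (ult_setC Up) => pB; apply: nDB; exists x.
  - move=> _ _ [D1 [B1 [KD1 rB1 ->]]] [D2 [B2 [KD2 rB2 ->]]].
    exists ((D1 `&` D2) `&` pre (B1 `&` B2)).
      exists (D1 `&` D2), (B1 `&` B2); split=> //; last exact: ultI Ur rB1 rB2.
      by move=> q Kq; apply: ultI (KU q Kq) (KD1 q Kq) (KD2 q Kq).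
    by move=> x [[D1x D2x] pB]; split; split=> //; apply: ultS Up _ pB => y [].
exists q.
  apply: Kc => // A KA; apply: ultS Uq _ (Gq (A `&` pre setT) _) => [x []//|].
  by exists A, setT; split=> //; exact: ultT.
apply: ult_ext Ur (ultra_mul_ult Uq Up) _ => B rB.
apply: ultS Uq _ (Gq (setT `&` pre B) _) => [x []//|].
by exists setT, B; split=> // s /KU /ultT.
Qed.

Lemma closed_stabilizer K p : closed K -> ult p ->
  closed (fun q => K q /\ mul q p = p).
Proof.
move=> Kc Up r Ur rcl; split; first by apply: Kc => // A KA; apply: rcl => q [/KA].
apply: esym; apply: ult_ext Up (ultra_mul_ult Ur Up) _ => B pB.
by apply: rcl => q [_ qp]; move: pB; rewrite -{1}qp.
Qed.

Lemma closed_subsemigroup_bigcap (C : (((M -> Prop) -> Prop) -> Prop) -> Prop) :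
  C !=set0 -> (forall K, C K -> closed_subsemigroup K) ->
  (forall K L, C K -> C L -> K `<=` L \/ L `<=` K) ->
  closed_subsemigroup (fun q => forall K, C K -> K q).
Proof.
move=> [K0 CK0] Ccs Ctot.
have CU K q : C K -> K q -> ult q by move=> /Ccs [KU _ _ _] /KU.
split.
- by move=> q /(_ K0 CK0); apply: CU.
- move=> r Ur rcl K CK; have [_ Kc _ _] := Ccs K CK.
  by apply: Kc => // A KA; apply: rcl => q /(_ K CK) /KA.
- move=> p q Cp Cq K CK; have [_ _ Ks _] := Ccs K CK.
  by apply: Ks; [apply: Cp | apply: Cq].
pose G A := exists2 K, C K & forall q, K q -> q A.
have [q [Uq Gq]] : ultrafilters_over G !=set0.
  apply: ultrafilter_of_base.
  - by exists setT, K0 => // q /(CU K0 q CK0) /ultT.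
  - move=> A [K CK KA]; have [_ _ _ [q Kq]] := Ccs K CK.
    exact: ult_ex (CU K q CK Kq) (KA q Kq).
  - move=> A B [K1 CK1 K1A] [K2 CK2 K2B]; exists (A `&` B) => //.
    have [K12|K21] := Ctot K1 K2 CK1 CK2.
      exists K1 => // q K1q.
      exact: ultI (CU K1 q CK1 K1q) (K1A q K1q) (K2B q (K12 q K1q)).
    exists K2 => // q K2q.
    exact: ultI (CU K2 q CK2 K2q) (K1A q (K21 q K2q)) (K2B q K2q).
exists q => K CK; have [_ Kc _ _] := Ccs K CK.
by apply: Kc => // A KA; apply: Gq; exists K.
Qed.

Definition minimal_closed_subsemigroup K :=
  closed_subsemigroup K /\
  forall L, closed_subsemigroup L -> L `<=` K -> K `<=` L.

Lemma ex_minimal_closed_subsemigroup K0 : closed_subsemigroup K0 ->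
  exists2 K, minimal_closed_subsemigroup K & K `<=` K0.
Proof.
move=> K0cs.
pose T := {K | closed_subsemigroup K /\ K `<=` K0}.
pose top : T := exist _ K0 (conj K0cs (fun q => id)).
pose R (K L : T) := `[< proj1_sig L `<=` proj1_sig K >].
have [[K [Kcs KK0]] Kmin] : exists t : T, premaximal R t.
  apply: (ZL_preorder top).
  - by move=> K; apply/asboolP.
  - by move=> K1 K2 K3 /asboolP K21 /asboolP K32; apply/asboolP => q /K32 /K21.
  move=> A Atot; have [[t1 At1]|A0] := pselect (A !=set0); last first.
    by exists top => t At; case: A0; exists t.
  pose C L := exists2 t : T, A t & L = proj1_sig t.
  pose I q := forall K, C K -> K q.
  have Ics : closed_subsemigroup I.
    apply: closed_subsemigroup_bigcap.
    - by exists (proj1_sig t1), t1.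
    - by move=> _ [t _ ->]; case: (proj2_sig t).
    move=> _ _ [t At ->] [s As ->].
    by have [/asboolP|/asboolP] := Atot t s At As; [right | left].
  have IK0 : I `<=` K0.
    by move=> q /(_ (proj1_sig t1)) It1; apply: (proj2 (proj2_sig t1)); apply: It1; exists t1.
  exists (exist _ I (conj Ics IK0)) => t At.
  by apply/asboolP => q /(_ (proj1_sig t)); apply; exists t.
exists K => //; split=> // L Lcs LK.
have LK0 : L `<=` K0 by move=> q /LK /KK0.
by have /asboolP := Kmin (exist _ L (conj Lcs LK0)) (asboolT LK).
Qed.

(* Both K * p and the stabilizer of p in K are closed subsemigroups of K. *)
Lemma minimal_closed_subsemigroup_idem K p :
  minimal_closed_subsemigroup K -> K p -> mul p p = p.
Proof.
move=> [[KU Kc Ks _] Kmin] Kp; have Up := KU p Kp.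
have [q Kq qp] : exists2 q, K q & p = mul q p.
  apply: (Kmin (fun r => exists2 q, K q & r = mul q p)) => //.
  - split; last by exists (mul p p), p.
    + by move=> _ [q Kq ->]; apply: ultra_mul_ult (KU q Kq) Up.
    + exact: closed_mulr.
    move=> _ _ [q1 Kq1 ->] [q2 Kq2 ->]; exists (mul (mul q1 p) q2).
      exact: Ks (Ks _ _ Kq1 Kp) Kq2.
    by rewrite !ultra_mulA.
  by move=> _ [s Ks' ->]; apply: Ks.
apply: proj2 (Kmin (fun r => K r /\ mul r p = p) _ _ p Kp); last by move=> r [].
split; last by exists q.
- by move=> r [/KU].
- exact: closed_stabilizer.
by move=> r s [Kr rp] [Ks' sp]; split; [apply: Ks | rewrite ultra_mulA sp].
Qed.

Theorem ellis_numakura K0 : closed_subsemigroup K0 -> exists2 e, K0 e & mul e e = e.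
Proof.
move=> /ex_minimal_closed_subsemigroup [K Kmin KK0].
have [_ _ _ [e Ke]] := proj1 Kmin.
by exists e; [apply: KK0 | apply: minimal_closed_subsemigroup_idem Kmin Ke].
Qed.

End StoneCech.

Section FiniteProducts.
Variables (M : Type) (op : M -> M -> M).
Hypothesis opA : forall a b c : M, op a (op b c) = op (op a b) c.
Implicit Types (x : nat -> M) (l : list nat).

Lemma fold_left_op x l a b :
  fold_left (fun acc i => op acc (x i)) l (op a b) =
  op a (fold_left (fun acc i => op acc (x i)) l b).
Proof. by elim: l b => [|i l IHl] b //=; rewrite -opA IHl. Qed.

Lemma fp_prod_cons x i0 i1 l :
  fp_prod M op x i0 (i1 :: l) = op (x i0) (fp_prod M op x i1 l).
Proof. exact: fold_left_op. Qed.

Lemma fp_prod_app x i0 l1 j0 l2 :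
  fp_prod M op x i0 (l1 ++ j0 :: l2) =
  op (fp_prod M op x i0 l1) (fp_prod M op x j0 l2).
Proof. by rewrite /fp_prod fold_left_app; apply: fold_left_op. Qed.

Lemma Sorted_lt_app i0 l1 j0 l2 :
  Sorted lt (i0 :: l1) -> (forall k, In k (i0 :: l1) -> k < j0) ->
  Sorted lt (j0 :: l2) -> Sorted lt (i0 :: l1 ++ j0 :: l2).
Proof.
elim: l1 i0 => [|i1 l1 IHl1] i0 /= s1 lt_j0 s2.
  by constructor => //; constructor; apply: lt_j0; left.
have [s1' hd01] := Sorted_inv s1; have lt01 := HdRel_inv hd01.
constructor; last by constructor.
by apply: IHl1 => // k k_in; apply: lt_j0; right.
Qed.

Definition fp_tail x m z :=
  exists i0 l, [/\ m <= i0, Sorted lt (i0 :: l) & z = fp_prod M op x i0 l].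

Lemma fp_tail_mul x m u : fp_tail x m u ->
  exists N, forall v, fp_tail x N v -> fp_tail x m (op u v).
Proof.
move=> [i0 [l [le_m s1 ->]]]; exists (S (list_max (i0 :: l))).
move=> _ [j0 [l2 [le_N s2 ->]]]; exists i0, (l ++ j0 :: l2); split=> //.
  apply: Sorted_lt_app => // k k_in.
  have /Forall_forall/(_ k k_in) : Forall (fun k => k <= list_max (i0 :: l)) (i0 :: l).
    exact/list_max_le.
  lia.
by rewrite fp_prod_app.
Qed.

End FiniteProducts.

Section GalvinGlazer.
Variables (M : Type) (op : M -> M -> M).
Hypothesis opA : forall a b c : M, op a (op b c) = op (op a b) c.
Variable p : (M -> Prop) -> Prop.
Hypotheses (Up : is_ultrafilter M p) (p_free : free p).
Hypothesis p_idem : ultra_mul M op p p = p.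
Implicit Types (A B : M -> Prop).

Definition star B x := B x /\ p (fun y => B (op x y)).

Lemma star_in B : p B -> p (star B).
Proof. by move=> pB; have := pB; rewrite -{1}p_idem; apply: ultI Up pB. Qed.

Lemma star_mul B x : star B x -> p (fun y => star B (op x y)).
Proof.
move=> [_ pBx]; have := pBx; rewrite -{1}p_idem => ppBx.
apply: ultS Up _ (ultI Up pBx ppBx) => y [Bxy pBxy]; split=> //.
by apply: ultS Up _ pBxy => z; rewrite opA.
Qed.

Definition pick B : M := epsilon (ult_inhabited Up) B.

Lemma pick_in B : p B -> B (pick B).
Proof. by move=> pB; apply: epsilon_spec; apply: ult_ex Up pB. Qed.

(* A_0 = A*, x_n = pick A_n and A_{n+1} = (A_n /\ x_n^-1 A_n \ {x_n})*;
   removing x_n makes the sequence injective. *)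
Fixpoint gg_set A n : M -> Prop :=
  match n with
  | 0 => star A
  | S n => let x := pick (gg_set A n) in
           star (fun z => [/\ gg_set A n z, gg_set A n (op x z) & z <> x])
  end.

Definition gg_seq A n := pick (gg_set A n).

Variable A : M -> Prop.
Hypothesis pA : p A.

Lemma gg_set_mul n y : gg_set A n y -> p (fun z => gg_set A n (op y z)).
Proof. by case: n => [|n]; apply: star_mul. Qed.

Lemma gg_set_in n : p (gg_set A n).
Proof.
elim: n => [|n IHn] /=; first exact: star_in.
have pxn := gg_set_mul (pick_in IHn).
apply/star_in/(ultS Up _ (ultI Up (ultI Up IHn pxn) (p_free (pick (gg_set A n))))).
by move=> z [[]].
Qed.

Lemma gg_seq_in n : gg_set A n (gg_seq A n).
Proof. exact: pick_in (gg_set_in n). Qed.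

Lemma gg_setS n z : gg_set A (S n) z ->
  [/\ gg_set A n z, gg_set A n (op (gg_seq A n) z) & z <> gg_seq A n].
Proof. by case. Qed.

Lemma gg_set_le m n : m <= n -> gg_set A n `<=` gg_set A m.
Proof. by elim=> // n' _ IH z /gg_setS [/IH]. Qed.

Lemma gg_set_fp i0 l :
  Sorted lt (i0 :: l) -> gg_set A i0 (fp_prod M op (gg_seq A) i0 l).
Proof.
elim: l i0 => [|i1 l IHl] i0 s; first exact: gg_seq_in.
have [s1 hd01] := Sorted_inv s; have lt01 := HdRel_inv hd01.
rewrite fp_prod_cons //.
by have /gg_setS [] := gg_set_le lt01 (IHl i1 s1).
Qed.

Lemma gg_seq_inj m n : gg_seq A m = gg_seq A n -> m = n.
Proof.
suff neq k j : k < j -> gg_seq A j <> gg_seq A k.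
  by move=> xmn; case: (Nat.lt_trichotomy m n) => [/neq|[//|/neq]]; rewrite xmn.
by move=> lt_kj; have /gg_setS [] := gg_set_le lt_kj (gg_seq_in j).
Qed.

Lemma idempotent_DIP : DIP M op A.
Proof.
exists (gg_seq A); split; first exact: gg_seq_inj.
by move=> i0 l /gg_set_fp /(gg_set_le (le_0_n i0)) [].
Qed.

End GalvinGlazer.

Section FpTails.
Variables (M : Type) (op : M -> M -> M).
Hypotheses (opA : forall a b c : M, op a (op b c) = op (op a b) c)
  (op_moving : moving M op).
Variable x : nat -> M.
Hypothesis x_inj : forall m n, x m = x n -> m = n.
Local Notation tail := (fp_tail op x).

Definition fp_tail_ultrafilter p :=
  [/\ is_ultrafilter M p, free p & forall m, p (tail m)].

Lemma ex_notin_seq (L : list M) m : exists2 n, m <= n & ~ In (x n) L.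
Proof.
elim: L m => [|a L IHL] m; first by exists m.
have [n le_mn xnL] := IHL m; have [->|xna] := pselect (a = x n); last first.
  by exists n => // [[|]].
have [k le_Snk xkL] := IHL (S n); exists k; first lia.
by move=> [/x_inj|//]; lia.
Qed.

Lemma ex_fp_tail_ultrafilter : fp_tail_ultrafilter !=set0.
Proof.
pose B A := exists m L, A = fun z => tail m z /\ ~ In z L.
have [p [Up Bp]] : ultrafilters_over B !=set0.
  apply: ultrafilter_of_base.
  - by exists (fun z => tail 0 z /\ ~ In z []), 0, [].
  - move=> _ [m [L ->]]; have [n le_mn xnL] := ex_notin_seq L m.
    by exists (x n); split=> //; exists n, []; split=> //; constructor.
  - move=> _ _ [m1 [L1 ->]] [m2 [L2 ->]].
    exists (fun z => tail (max m1 m2) z /\ ~ In z (L1 ++ L2)).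
      by exists (max m1 m2), (L1 ++ L2).
    move=> z [[i0 [l [le_i0 s ->]]] zL]; rewrite in_app_iff in zL.
    by split; split; try (exists i0, l; split=> //; lia); tauto.
have pB m L : p (fun z => tail m z /\ ~ In z L) by apply: Bp; exists m, L.
exists p; split=> // [a | m]; last by apply: ultS Up _ (pB m []) => z [].
by apply: ultS Up _ (pB 0 [a]) => z [_ za] az; apply: za; left.
Qed.

Lemma closed_subsemigroup_fp_tail_ultrafilter :
  closed_subsemigroup op fp_tail_ultrafilter.
Proof.
split; [by move=> p [] | | | exact: ex_fp_tail_ultrafilter].
  by move=> r Ur rcl; split=> // [a | m]; apply: rcl => q [].
move=> p q [Up p_free p_tail] [Uq q_free q_tail].
have Upq := ultra_mul_ult op Up Uq; split=> //.
  apply/(free_not_principal Upq); apply: op_moving => //.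
    exact/(free_not_principal Up).
  exact/(free_not_principal Uq).
move=> m; apply: ultS Up _ (p_tail m) => u /(fp_tail_mul opA) [N uN].
exact: ultS Uq _ (q_tail N).
Qed.

End FpTails.

Theorem mainTheorem3 (M : Type) (op : M -> M -> M)
  (assoc : forall a b c : M, op a (op b c) = op (op a b) c)
  (Hmov : moving M op)
  (X Y : M -> Prop) :
  DIP M op X -> (forall y, Y y -> X y) ->
  DIP M op Y \/ DIP M op (fun z => X z /\ ~ Y z).
Proof.
move=> [x [x_inj FPX]] _.
have [e [Ue e_free e_tail] e_idem] :=
  ellis_numakura assoc (closed_subsemigroup_fp_tail_ultrafilter assoc Hmov x_inj).
have eX : e X by apply: ultS Ue _ (e_tail 0) => _ [i0 [l [_ s ->]]]; apply: FPX.
have [eY|neY] := pselect (e Y); [left | right].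
  exact: (idempotent_DIP assoc Ue e_free e_idem eY).
exact: (idempotent_DIP assoc Ue e_free e_idem (ultI Ue eX (ult_setC Ue neY))).
Qed.
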